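(* Let $(X,d)$ be a metric space, let $k\geq 1$, let $p_1,\dots,p_k\in X$ and put $D=X\setminus\{p_1,\dots,p_k\}$. Define on $D$ $$\hat\tau_D(x,y)=\frac1k\sum_{i=1}^k\log\Big(1+2\frac{d(x,y)}{\sqrt{d(x,p_i)d(y,p_i)}}\Big),\qquad \tilde\tau_D(x,y)=\frac1k\sum_{i=1}^k\log\Big(1+\frac{d(x,y)}{\sqrt{d(x,p_i)d(y,p_i)}}\Big).$$ Then the space $(D,\hat\tau_D)$ is Gromov hyperbolic with $\delta=3\log 3+\log 2$, i.e. for all $x,y,z,v\in D$, $$\hat\tau_D(x,y)+\hat\tau_D(z,v)\leq \max\{\hat\tau_D(x,z)+\hat\tau_D(y,v),\ \hat\tau_D(x,v)+\hat\tau_D(y,z)\}+2\delta.$$ In particular, if $(X,d)$ is Ptolemaic, then the space $(D,\tilde\tau_D)$ is Gromov hyperbolic with $\delta=3\log 3$ (i.e. $\tilde\tau_D$ satisfies the same four-point inequality with $\delta=3\log 3$).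
   Context: A metric space $(X,d)$ is Ptolemaic if $d(x,y)d(z,w)\leq d(x,z)d(y,w)+d(x,w)d(y,z)$ for all $x,y,z,w\in X$. A space $(Y,\rho)$ is Gromov hyperbolic with constant $\delta\ge 0$ if $\rho(x,y)+\rho(z,v)\leq \max\{\rho(x,z)+\rho(y,v),\ \rho(x,v)+\rho(y,z)\}+2\delta$ for all $x,y,z,v\in Y$. *)

From Stdlib Require Import Reals.
Open Scope R_scope.

Definition is_metric {X : Type} (d : X -> X -> R) : Prop :=
  (forall x y, 0 <= d x y) /\
  (forall x y, d x y = 0 <-> x = y) /\
  (forall x y, d x y = d y x) /\
  (forall x y z, d x z <= d x y + d y z).

Definition ptolemaic {X : Type} (d : X -> X -> R) : Prop :=
  forall x y z w, d x y * d z w <= d x z * d y w + d x w * d y z.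

(* D = X \ {p_0, ..., p_(k-1)} *)
Definition inD {X : Type} (k : nat) (p : nat -> X) (x : X) : Prop :=
  forall i, (i < k)%nat -> x <> p i.

Definition tau_c {X : Type} (c : R) (d : X -> X -> R) (k : nat) (p : nat -> X)
  (x y : X) : R :=
  / INR k * sum_f_R0 (fun i => ln (1 + c * (d x y / sqrt (d x (p i) * d y (p i))))) (k - 1).

Definition tau_hat {X : Type} := @tau_c X 2.
Definition tau_tilde {X : Type} := @tau_c X 1.

Definition gromov_hyperbolic {X : Type} (P : X -> Prop) (rho : X -> X -> R) (delta : R) : Prop :=
  forall x y z v, P x -> P y -> P z -> P v ->
    rho x y + rho z v <= Rmax (rho x z + rho y v) (rho x v + rho y z) + 2 * delta.

From Stdlib Require Import Reals Lra Psatz Lia.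
Open Scope R_scope.

(* Fix one of the points q = p_i and write a_u = d(u, q).  The i-th summand of
   tau_c(u, w) is log K(u, w) - (log a_u + log a_w) / 2, where
   K(u, w) = sqrt (a_u a_w) + c d(u, w).  In the four-point expression the
   a-terms cancel, so everything reduces to the metric estimate
   K(x, y) K(z, v) <= 100 K(x, z) K(y, v), valid once the pairing is chosen
   with d(x, v) d(y, z) <= d(x, z) d(y, v); it follows from
   K(u, w) <= 5/2 (a_u + a_w) and a_u a_w <= 4 K(x, z) K(y, v) for u in {x, y},
   w in {z, v}.  Hence delta = (log 100) / 2 works
   for every c in [1, 2] and every metric. *)

Lemma ln_le (x y : R) : 0 < x -> x <= y -> ln x <= ln y.
Proof.
  intros Hx [Hlt | ->]; [left; apply ln_increasing |]; lra.
Qed.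

Lemma ln_100_le : ln 100 / 2 <= 3 * ln 3.
Proof.
  assert (H : ln 100 <= ln (3 ^ 6)) by (apply ln_le; simpl; lra).
  rewrite ln_pow in H by lra. simpl in H. lra.
Qed.

Lemma sqrt_mult_ge_l (a b : R) : 0 <= a -> a <= b -> a <= sqrt (a * b).
Proof.
  intros Ha Hab. rewrite <- (sqrt_square a) at 1 by exact Ha.
  apply sqrt_le_1_alt. nra.
Qed.

Lemma sqrt_mult_le_avg (a b : R) : 0 <= a -> 0 <= b -> sqrt (a * b) <= (a + b) / 2.
Proof.
  intros Ha Hb. rewrite sqrt_mult by assumption.
  pose proof (sqrt_sqrt a Ha). pose proof (sqrt_sqrt b Hb).
  pose proof (Rle_0_sqr (sqrt a - sqrt b)). unfold Rsqr in *. nra.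
Qed.

Lemma gromov_hyperbolic_mono {X : Type} (P : X -> Prop) (rho : X -> X -> R) (delta delta' : R) :
  delta <= delta' -> gromov_hyperbolic P rho delta -> gromov_hyperbolic P rho delta'.
Proof.
  intros Hle Hg x y z v Hx Hy Hz Hv. specialize (Hg x y z v Hx Hy Hz Hv). lra.
Qed.

Lemma gromov_hyperbolic_of_ordered {X : Type} (P : X -> Prop) (rho m : X -> X -> R) (delta : R) :
  (forall x y, rho x y = rho y x) ->
  (forall x y z v, P x -> P y -> P z -> P v -> m x v * m y z <= m x z * m y v ->
     rho x y + rho z v <= rho x z + rho y v + 2 * delta) ->
  gromov_hyperbolic P rho delta.
Proof.
  intros Hsym Hord x y z v Hx Hy Hz Hv.
  pose proof (Rmax_l (rho x z + rho y v) (rho x v + rho y z)).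
  pose proof (Rmax_r (rho x z + rho y v) (rho x v + rho y z)).
  destruct (Rle_dec (m x v * m y z) (m x z * m y v)) as [Hle | Hgt].
  - specialize (Hord x y z v Hx Hy Hz Hv Hle). lra.
  - assert (H' : m x z * m y v <= m x v * m y z) by lra.
    specialize (Hord x y v z Hx Hy Hv Hz H'). rewrite (Hsym v z) in Hord. lra.
Qed.

Lemma mean_le_add (k : nat) (f g : nat -> R) (C : R) : (1 <= k)%nat ->
  (forall i, (i < k)%nat -> f i <= g i + C) ->
  / INR k * sum_f_R0 f (k - 1) <= / INR k * sum_f_R0 g (k - 1) + C.
Proof.
  intros Hk Hfg.
  assert (Hk0 : 0 < INR k) by (apply lt_0_INR; lia).
  assert (Hsum : sum_f_R0 f (k - 1) <= sum_f_R0 (fun i => g i + C) (k - 1)).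
  { apply sum_Rle. intros i Hi. apply Hfg. lia. }
  rewrite plus_sum, sum_cte in Hsum. replace (S (k - 1)) with k in Hsum by lia.
  apply Rmult_le_reg_l with (INR k); [exact Hk0 |].
  replace (INR k * (/ INR k * sum_f_R0 g (k - 1) + C))
    with (sum_f_R0 g (k - 1) + C * INR k) by (field; lra).
  rewrite <- Rmult_assoc, Rinv_r, Rmult_1_l by lra. exact Hsum.
Qed.

Section MetricFacts.

Context {X : Type} (d : X -> X -> R) (Hd : is_metric d).

Lemma dist_ge0 (u w : X) : 0 <= d u w.
Proof. apply Hd. Qed.

Lemma dist_sym (u w : X) : d u w = d w u.
Proof. apply Hd. Qed.

Lemma dist_pos (u w : X) : u <> w -> 0 < d u w.
Proof.
  intros Huw. destruct (dist_ge0 u w) as [H | H]; [exact H |].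
  exfalso. apply Huw, Hd. auto.
Qed.

Lemma dist_le_via (q u w : X) : d u w <= d u q + d w q.
Proof. rewrite (dist_sym w q). apply Hd. Qed.

Lemma dist_ge_diff (q u w : X) : d u q - d w q <= d u w.
Proof. pose proof (proj2 (proj2 (proj2 Hd)) u w q). lra. Qed.

End MetricFacts.

Section Kernel.

Context {X : Type} (d : X -> X -> R) (Hd : is_metric d) (c : R) (Hc : 1 <= c <= 2).

Definition tau_kernel (q u w : X) : R := sqrt (d u q * d w q) + c * d u w.

Lemma tau_kernel_sym (q u w : X) : tau_kernel q u w = tau_kernel q w u.
Proof. unfold tau_kernel. rewrite Rmult_comm, (dist_sym d Hd u w). reflexivity. Qed.

Lemma tau_kernel_ge_dist (q u w : X) : d u w <= tau_kernel q u w.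
Proof.
  unfold tau_kernel. pose proof (sqrt_pos (d u q * d w q)).
  pose proof (dist_ge0 d Hd u w). nra.
Qed.

Lemma tau_kernel_ge_base (q u w : X) : d u q <= tau_kernel q u w.
Proof.
  unfold tau_kernel.
  pose proof (dist_ge0 d Hd u q). pose proof (dist_ge0 d Hd w q).
  pose proof (dist_ge0 d Hd u w). pose proof (dist_ge_diff d Hd q u w).
  destruct (Rle_dec (d u q) (d w q)).
  - pose proof (sqrt_mult_ge_l (d u q) (d w q)). nra.
  - rewrite Rmult_comm. pose proof (sqrt_mult_ge_l (d w q) (d u q)). nra.
Qed.

Lemma tau_kernel_le (q u w : X) : tau_kernel q u w <= 5 / 2 * (d u q + d w q).
Proof.
  unfold tau_kernel.
  pose proof (sqrt_mult_le_avg (d u q) (d w q) (dist_ge0 d Hd _ _) (dist_ge0 d Hd _ _)).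
  pose proof (dist_le_via d Hd q u w). pose proof (dist_ge0 d Hd u w). nra.
Qed.

Lemma tau_kernel_base_mul_le (q x y z v : X) : d x v * d y z <= d x z * d y v ->
  d x q * d z q <= 4 * (tau_kernel q x z * tau_kernel q y v).
Proof.
  intros Hord.
  set (F := tau_kernel q x z). set (G := tau_kernel q y v).
  pose proof (dist_ge0 d Hd x q). pose proof (dist_ge0 d Hd y q).
  pose proof (dist_ge0 d Hd z q). pose proof (dist_ge0 d Hd v q).
  assert (HxF : d x q <= F) by apply tau_kernel_ge_base.
  assert (HzF : d z q <= F) by (unfold F; rewrite tau_kernel_sym; apply tau_kernel_ge_base).
  assert (HyG : d y q <= G) by apply tau_kernel_ge_base.
  assert (HvG : d v q <= G) by (unfold G; rewrite tau_kernel_sym; apply tau_kernel_ge_base).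
  destruct (Rle_dec (d x q) (4 * d v q)).
  { assert (d z q * d v q <= F * G) by (apply Rmult_le_compat; auto). nra. }
  destruct (Rle_dec (d z q) (4 * d y q)).
  { assert (d x q * d y q <= F * G) by (apply Rmult_le_compat; auto). nra. }
  (* Only in this remaining case is the ordering of the pairs needed. *)
  assert (Hxv : 3 / 4 * d x q <= d x v) by (pose proof (dist_ge_diff d Hd q x v); lra).
  assert (Hyz : 3 / 4 * d z q <= d y z).
  { pose proof (dist_ge_diff d Hd q z y). rewrite (dist_sym d Hd z y) in *. lra. }
  assert (3 / 4 * d x q * (3 / 4 * d z q) <= d x v * d y z)
    by (apply Rmult_le_compat; lra).
  assert (d x z * d y v <= F * G).
  { apply Rmult_le_compat; try apply dist_ge0; auto; apply tau_kernel_ge_dist. }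
  nra.
Qed.

Lemma tau_kernel_four_point (q x y z v : X) : d x v * d y z <= d x z * d y v ->
  tau_kernel q x y * tau_kernel q z v <= 100 * (tau_kernel q x z * tau_kernel q y v).
Proof.
  intros Hord.
  set (F := tau_kernel q x z). set (G := tau_kernel q y v).
  pose proof (dist_ge0 d Hd x q). pose proof (dist_ge0 d Hd y q).
  pose proof (dist_ge0 d Hd z q). pose proof (dist_ge0 d Hd v q).
  assert (Hxz : d x q * d z q <= 4 * (F * G)) by (apply tau_kernel_base_mul_le; exact Hord).
  assert (Hyv : d y q * d v q <= 4 * (F * G)).
  { unfold F, G. rewrite (Rmult_comm (tau_kernel q x z)).
    apply tau_kernel_base_mul_le. lra. }
  assert (Hxv : d x q * d v q <= F * G).
  { apply Rmult_le_compat; auto; [apply tau_kernel_ge_base |].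
    unfold G. rewrite tau_kernel_sym. apply tau_kernel_ge_base. }
  assert (Hyz : d y q * d z q <= G * F).
  { apply Rmult_le_compat; auto; [apply tau_kernel_ge_base |].
    unfold F. rewrite tau_kernel_sym. apply tau_kernel_ge_base. }
  assert (0 <= tau_kernel q x y) by (eapply Rle_trans; [| apply tau_kernel_ge_base]; auto).
  assert (0 <= tau_kernel q z v) by (eapply Rle_trans; [| apply tau_kernel_ge_base]; auto).
  assert (tau_kernel q x y * tau_kernel q z v
          <= 5 / 2 * (d x q + d y q) * (5 / 2 * (d z q + d v q)))
    by (apply Rmult_le_compat; auto; apply tau_kernel_le).
  nra.
Qed.

Definition tau_term (q u w : X) : R := ln (1 + c * (d u w / sqrt (d u q * d w q))).

Lemma tau_term_split (q u w : X) : u <> q -> w <> q ->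
  tau_term q u w = ln (tau_kernel q u w) - ln (sqrt (d u q)) - ln (sqrt (d w q)).
Proof.
  intros Hu Hw. unfold tau_term.
  assert (Ha : 0 < sqrt (d u q)) by (apply sqrt_lt_R0, (dist_pos d Hd); auto).
  assert (Hb : 0 < sqrt (d w q)) by (apply sqrt_lt_R0, (dist_pos d Hd); auto).
  assert (HK : 0 < tau_kernel q u w).
  { eapply Rlt_le_trans; [apply (dist_pos d Hd) | apply tau_kernel_ge_base]; auto. }
  replace (1 + c * (d u w / sqrt (d u q * d w q)))
    with (tau_kernel q u w * / (sqrt (d u q) * sqrt (d w q))).
  - assert (Hab : 0 < sqrt (d u q) * sqrt (d w q)) by (apply Rmult_lt_0_compat; auto).
    rewrite ln_mult, ln_Rinv, ln_mult by auto using Rinv_0_lt_compat.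
    ring.
  - unfold tau_kernel. rewrite sqrt_mult by apply (dist_ge0 d Hd). field. lra.
Qed.

Lemma tau_term_four_point (q x y z v : X) :
  x <> q -> y <> q -> z <> q -> v <> q -> d x v * d y z <= d x z * d y v ->
  tau_term q x y + tau_term q z v <= tau_term q x z + tau_term q y v + ln 100.
Proof.
  intros Hx Hy Hz Hv Hord.
  rewrite !tau_term_split by assumption.
  assert (HK : forall u w, u <> q -> 0 < tau_kernel q u w).
  { intros u w Hu. eapply Rlt_le_trans; [apply (dist_pos d Hd) | apply tau_kernel_ge_base]; auto. }
  assert (Hln : ln (tau_kernel q x y * tau_kernel q z v)
                <= ln (100 * (tau_kernel q x z * tau_kernel q y v))).
  { apply ln_le; [apply Rmult_lt_0_compat; auto | apply tau_kernel_four_point; exact Hord]. }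
  rewrite !ln_mult in Hln by (try apply Rmult_lt_0_compat; auto; lra).
  lra.
Qed.

End Kernel.

Lemma tau_c_eq {X : Type} (c : R) (d : X -> X -> R) (k : nat) (p : nat -> X) (x y : X) :
  tau_c c d k p x y = / INR k * sum_f_R0 (fun i => tau_term d c (p i) x y) (k - 1).
Proof. reflexivity. Qed.

Lemma tau_c_sym {X : Type} (c : R) (d : X -> X -> R) (k : nat) (p : nat -> X) (x y : X) :
  is_metric d -> tau_c c d k p x y = tau_c c d k p y x.
Proof.
  intros Hd. unfold tau_c. f_equal. apply sum_eq. intros i _.
  rewrite (dist_sym d Hd x y), (Rmult_comm (d x (p i))). reflexivity.
Qed.

Lemma tau_c_four_point {X : Type} (c : R) (d : X -> X -> R) (k : nat) (p : nat -> X)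
    (x y z v : X) :
  is_metric d -> 1 <= c <= 2 -> (1 <= k)%nat ->
  inD k p x -> inD k p y -> inD k p z -> inD k p v ->
  d x v * d y z <= d x z * d y v ->
  tau_c c d k p x y + tau_c c d k p z v <= tau_c c d k p x z + tau_c c d k p y v + ln 100.
Proof.
  intros Hd Hc Hk Hx Hy Hz Hv Hord. rewrite !tau_c_eq.
  rewrite <- !Rmult_plus_distr_l, <- !plus_sum.
  apply mean_le_add; [exact Hk |]. intros i Hi.
  apply tau_term_four_point; auto.
Qed.

Lemma tau_c_gromov_hyperbolic {X : Type} (c : R) (d : X -> X -> R) (k : nat) (p : nat -> X) :
  is_metric d -> 1 <= c <= 2 -> (1 <= k)%nat ->
  gromov_hyperbolic (inD k p) (tau_c c d k p) (ln 100 / 2).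
Proof.
  intros Hd Hc Hk. apply gromov_hyperbolic_of_ordered with d.
  - intros x y. apply tau_c_sym, Hd.
  - intros x y z v Hx Hy Hz Hv Hord.
    replace (2 * (ln 100 / 2)) with (ln 100) by field.
    apply tau_c_four_point; auto.
Qed.

Theorem theorem4p2 (X : Type) (d : X -> X -> R) (k : nat) (p : nat -> X) :
  is_metric d -> (1 <= k)%nat ->
  gromov_hyperbolic (inD k p) (tau_hat d k p) (3 * ln 3 + ln 2) /\
  (ptolemaic d -> gromov_hyperbolic (inD k p) (tau_tilde d k p) (3 * ln 3)).
Proof.
  intros Hd Hk. pose proof ln_100_le. pose proof ln_lt_2. split.
  - apply gromov_hyperbolic_mono with (ln 100 / 2); [lra |].
    apply tau_c_gromov_hyperbolic; auto; lra.
  - intros _. apply gromov_hyperbolic_mono with (ln 100 / 2); [lra |].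
    apply tau_c_gromov_hyperbolic; auto; lra.
Qed.
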